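(* Consider the sequentially observed MDP described in the context. Define functions on nonnegative vectors $\mathbf{x}\in\mathbb{R}^n_{\ge 0}$ by $J_N(\mathbf{x})=\mathbf{x}^T\mathbf{r}_N$ and, for $t=N-1,\dots,1$, $$J_t(\mathbf{x})=\max_{P_1(t),\dots,P_n(t)\in\mathcal{C}}\Big\{\mathbf{x}^T\mathbf{r}_t+J_{t+1}(M_t\mathbf{x})\Big\}.$$ Define vectors $V^*_t\in\mathbb{R}^n$ recursively by $V^*_N=\mathbf{r}_N$ and, for $t=N-1,\dots,1$ and $i=1,\dots,n$, $$V^*_t(i)=\max_{P_i(t)\in\mathcal{C}}\Big\{r_t(i)+M^{Ti}_tV^*_{t+1}\Big\}.$$ Then for every $t=1,\dots,N$ and every $\mathbf{x}\in\mathbb{R}^n_{\ge 0}$, $J_t(\mathbf{x})=\mathbf{x}^TV^*_t$.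
   Context: States $S=\{1,\dots,n\}$; at every state the available actions are $a_1,\dots,a_m$ (in this fixed order); decision epochs $t=1,\dots,N-1$ with $N\ge 2$. For each epoch $t$, state $i$, action index $k$, let $G_i(j,k,t)\ge 0$ with $\sum_{j}G_i(j,k,t)=1$ be the probability that taking action $a_k$ in state $i$ leads to state $j$. Rewards $r_t(i,a_k)\in\mathbb{R}$ for $t\le N-1$ and terminal rewards $r_N(i)\in\mathbb{R}$; $\mathbf{r}_N$ is the vector with entries $r_N(i)$. Model: at each epoch the agent in state $i$ observes, in phase $k=1,\dots,m-1$, the realized transition of action $a_k$ and accepts it (taking $a_k$) or rejects it and moves to phase $k+1$; if all $a_1,\dots,a_{m-1}$ are rejected, $a_m$ is taken. The decision variables at epoch $t$ are matrices $P_i(t)\in[0,1]^{n\times m}$, $i=1,\dots,n$, whose entry $P_i(j,k,t)$ is the probability of accepting an observed transition to state $j$ when in state $i$, phase $k$, epoch $t$, with the convention $P_i(j,m,t)=1$ for all $j$; $\mathcal{C}$ denotes the set of all such matrices. Dropping the index $t$: $q_i(a_k)=\sum_{j}G_i(j,k)P_i(j,k)$ (so $q_i(a_m)=1$); $p_i(a_k)=\big(\prod_{l=1}^{k-1}(1-q_i(a_l))\big)q_i(a_k)$ (empty product equal to $1$); $r_t(i)=\sum_{k=1}^m p_i(a_k)r_t(i,a_k)$, and $\mathbf{r}_t$ is the vector with entries $r_t(i)$; $M_t$ is the $n\times n$ matrix with entries $M_t(j,i)=\sum_{k=1}^m\big(\prod_{l=1}^{k-1}(1-q_i(a_l))\big)G_i(j,k)P_i(j,k)$.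 Thus $r_t(i)$ and the $i$-th column of $M_t$ depend only on $P_i(t)$; $M^{Ti}_t$ denotes the transpose of the $i$-th column of $M_t$. The state distribution evolves as $\mathbf{x}_{t+1}=M_t\mathbf{x}_t$. *)

From HB Require Import structures.
From mathcomp Require Import all_boot all_order all_algebra.
From mathcomp Require Import classical_sets reals.
Set Implicit Arguments. Unset Strict Implicit. Unset Printing Implicit Defensive.
Import Order.TTheory GRing.Theory Num.Theory.
Local Open Scope ring_scope.
Local Open Scope classical_set_scope.

Section SOMDP.
Variables (R : realType) (n m : nat).

(* Transition kernel: G t i j k = G_i(j,k,t) : prob. that action a_k in state i
   at epoch t leads to state j.  States 'I_n, actions 'I_m (a_1..a_m ~ 0..m-1). *)
Definition kernel := nat -> 'I_n -> 'I_n -> 'I_m -> R.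

Definition inC (P : 'M[R]_(n, m)) : Prop :=
  (forall j k, 0 <= P j k <= 1) /\
  (forall j (k : 'I_m), val k = m.-1 -> P j k = 1).

Definition qv (G : kernel) t (i : 'I_n) (P : 'M[R]_(n, m)) (k : 'I_m) : R :=
  \sum_(j < n) G t i j k * P j k.

Definition notyet (G : kernel) t i P (k : 'I_m) : R :=
  \prod_(l < m | (val l < val k)%N) (1 - qv G t i P l).

Definition pv (G : kernel) t i P (k : 'I_m) : R := notyet G t i P k * qv G t i P k.

Definition rew (G : kernel) (r : nat -> 'I_n -> 'I_m -> R) t i P : R :=
  \sum_(k < m) pv G t i P k * r t i k.

(* M_t(j,i), depending only on P_i(t) *)
Definition Mcol (G : kernel) t i P (j : 'I_n) : R :=
  \sum_(k < m) notyet G t i P k * G t i j k * P j k.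

Definition Mapply (G : kernel) t (Ps : 'I_n -> 'M[R]_(n, m)) (x : 'I_n -> R)
  : 'I_n -> R := fun j => \sum_(i < n) Mcol G t i (Ps i) j * x i.

Definition dotv (x y : 'I_n -> R) : R := \sum_(i < n) x i * y i.

(* J indexed by distance d = N - t from the horizon *)
Fixpoint Jd (G : kernel) r (rN : 'I_n -> R) (N : nat) (d : nat)
  (x : 'I_n -> R) : R :=
  match d with
  | 0 => dotv x rN
  | d'.+1 =>
      sup [set y | exists Ps : 'I_n -> 'M[R]_(n, m),
             (forall i, inC (Ps i)) /\
             y = dotv x (fun i => rew G r (N - d'.+1)%N i (Ps i))
                 + Jd G r rN N d' (Mapply G (N - d'.+1)%N Ps x)]
  end.

Definition J G r rN N t x := Jd G r rN N (N - t) x.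

Fixpoint Vd (G : kernel) r (rN : 'I_n -> R) (N : nat) (d : nat) : 'I_n -> R :=
  match d with
  | 0 => rN
  | d'.+1 => fun i =>
      sup [set y | exists P : 'M[R]_(n, m), inC P /\
             y = rew G r (N - d'.+1)%N i P
                 + dotv (Mcol G (N - d'.+1)%N i P) (Vd G r rN N d')]
  end.

Definition Vstar G r rN N t := Vd G r rN N (N - t).

End SOMDP.

(* The maximisation defining J_t(x) runs over families
   (P_1,...,P_n) in which P_i only affects r_t(i) and the i-th column of M_t, so
   once J_{t+1}(M_t x) = (M_t x)^T V*_{t+1} the objective splits as
   sum_i x_i (r_t(i) + M^{Ti}_t V*_{t+1}); the supremum of such a separable sum
   with nonnegative weights x_i is the x-weighted sum of the coordinatewise
   suprema, i.e. x^T V*_t. The suprema are finite because r_t(i) and the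
   entries of M_t are bounded uniformly in P_i. *)
From HB Require Import structures.
From mathcomp Require Import all_boot all_order all_algebra.
From mathcomp Require Import boolp classical_sets reals.
Import Order.TTheory GRing.Theory Num.Theory.
Local Open Scope ring_scope.
Local Open Scope classical_set_scope.

Section SupOver.
Variable R : realType.

Definition sup_over {T : Type} (A : T -> Prop) (f : T -> R) : R :=
  sup [set y | exists a, A a /\ y = f a].

Lemma eq_sup_over (T : Type) (A : T -> Prop) (f g : T -> R) :
  (forall a, A a -> f a = g a) -> sup_over A f = sup_over A g.
Proof.
move=> fg; congr sup; apply/seteqP; split=> y [a [Aa ->]]; exists a.
  by rewrite fg.
by rewrite -fg.
Qed.

Lemma has_sup_over (T : Type) (A : T -> Prop) (f : T -> R) (M : R) :
  (exists a, A a) -> (forall a, A a -> f a <= M) ->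
  has_sup [set y | exists a, A a /\ y = f a].
Proof.
move=> [a Aa] fM; split; first by exists (f a), a.
by exists M => _ [b [Ab ->]]; exact: fM.
Qed.
Arguments has_sup_over {T A f M}.

Lemma sup_over_sum (I : finType) (T : Type) (A : T -> Prop)
    (f : I -> T -> R) (x : I -> R) (M : I -> R) :
  (forall i, 0 <= x i) -> (exists a, A a) ->
  (forall i a, A a -> f i a <= M i) ->
  sup_over (fun p : I -> T => forall i, A (p i))
           (fun p => \sum_i x i * f i (p i))
  = \sum_i x i * sup_over A (f i).
Proof.
move=> x0 [a0 Aa0] fM.
have hsup i := has_sup_over (ex_intro _ a0 Aa0) (fM i).
have supf i a : A a -> f i a <= sup_over A (f i).
  by move=> Aa; apply: sup_upper_bound (hsup i) _ _; exists a.
apply/le_anti/andP; split.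
  apply: ge_sup; first by exists (\sum_i x i * f i a0), (fun=> a0).
  move=> _ [p [Ap ->]]; apply: ler_sum => i _.
  by apply: ler_wpM2l => //; exact: supf.
set X := \sum_i x i.
have X1 : 0 < X + 1 by apply: ltr_wpDl => //; exact: sumr_ge0.
apply/ler_addgt0Pr => e e0.
have dl0 : 0 < e / (X + 1) by exact: divr_gt0.
have near i : exists a, A a /\ sup_over A (f i) - e / (X + 1) < f i a.
  by have [_ [a [Aa ->]] lt] := sup_adherent dl0 (hsup i); exists a.
have [p Ap] := choice near.
have Sp : [set y | exists q : I -> T, (forall i, A (q i)) /\
                   y = \sum_i x i * f i (q i)] (\sum_i x i * f i (p i)).
  by exists p; split=> // i; case: (Ap i).
have hS : has_sup [set y | exists q : I -> T, (forall i, A (q i)) /\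
                   y = \sum_i x i * f i (q i)].
  apply: (has_sup_over (ex_intro _ p (fun i => (Ap i).1))) => q Aq.
  by apply: ler_sum => i _; apply: ler_wpM2l => //; exact: supf.
apply: le_trans (lerD (sup_upper_bound hS Sp) (lexx e)).
have -> : e = e / (X + 1) * (X + 1) by rewrite divfK // gt_eqF.
rewrite mulrDr mulr1 addrA -[leLHS]addr0 lerD ?(ltW dl0) //.
rewrite /X mulr_sumr -big_split /=.
apply: ler_sum => i _; rewrite [_ * x i]mulrC -mulrDr ler_wpM2l //.
by rewrite -lerBlDr; apply: ltW; case: (Ap i).
Qed.

End SupOver.
Arguments sup_over {R T}.
Arguments sup_over_sum {R I T A f x M}.
Arguments eq_sup_over {R T A f} g.

Section Bounds.
Variables (R : realType) (n m : nat) (G : kernel R n m) (t : nat).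
Hypothesis G_ge0 : forall i j k, 0 <= G t i j k.
Hypothesis G_sum1 : forall i k, \sum_(j < n) G t i j k = 1.

Lemma G_le1 i j k : G t i j k <= 1.
Proof.
rewrite -(G_sum1 i k) (bigD1 j) //= lerDl.
by apply: sumr_ge0 => l _.
Qed.

Variables (i : 'I_n) (P : 'M[R]_(n, m)).
Hypothesis PC : inC P.

Let P01 j k : 0 <= P j k <= 1. Proof. by case: PC. Qed.

Lemma qv_ge0 k : 0 <= qv G t i P k.
Proof.
apply: sumr_ge0 => j _; apply: mulr_ge0 => //.
by case/andP: (P01 j k).
Qed.

Lemma qv_le1 k : qv G t i P k <= 1.
Proof.
rewrite -(G_sum1 i k); apply: ler_sum => j _.
by case/andP: (P01 j k) => P0 P1; exact: ler_piMr.
Qed.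

Lemma notyet_ge0 k : 0 <= notyet G t i P k.
Proof. by apply: prodr_ge0 => l _; rewrite subr_ge0 qv_le1. Qed.

Lemma notyet_le1 k : notyet G t i P k <= 1.
Proof.
apply: prodr_ile1 => l _; rewrite subr_ge0 qv_le1 /=.
by rewrite lerBlDr lerDl qv_ge0.
Qed.

Lemma Mcol_ge0 j : 0 <= Mcol G t i P j.
Proof.
apply: sumr_ge0 => k _; case/andP: (P01 j k) => P0 _.
by rewrite !mulr_ge0 // notyet_ge0.
Qed.

Lemma Mcol_le j : Mcol G t i P j <= m%:R.
Proof.
rewrite -[m in m%:R]card_ord -sumr_const; apply: ler_sum => k _.
case/andP: (P01 j k) => P0 P1.
rewrite mulr_ile1 ?mulr_ge0 ?notyet_ge0 //.
by rewrite mulr_ile1 ?notyet_ge0 ?notyet_le1 ?G_le1.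
Qed.

Lemma rew_le (r : nat -> 'I_n -> 'I_m -> R) :
  rew G r t i P <= \sum_(k < m) `|r t i k|.
Proof.
apply: ler_sum => k _.
have p0 : 0 <= pv G t i P k by rewrite mulr_ge0 ?notyet_ge0 ?qv_ge0.
have p1 : pv G t i P k <= 1.
  by rewrite mulr_ile1 ?notyet_ge0 ?qv_ge0 ?notyet_le1 ?qv_le1.
apply: le_trans (ler_norm _) _; rewrite normrM (ger0_norm p0).
exact: ler_piMl.
Qed.

Lemma dotv_Mcol_le (V : 'I_n -> R) :
  dotv (Mcol G t i P) V <= \sum_(j < n) m%:R * `|V j|.
Proof.
apply: ler_sum => j _; apply: le_trans (ler_norm _) _.
by rewrite normrM ger0_norm ?Mcol_ge0 // ler_wpM2r ?Mcol_le.
Qed.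

End Bounds.

Lemma Mapply_ge0 {R : realType} {n m : nat} {G : kernel R n m} {t : nat}
    {Ps : 'I_n -> 'M[R]_(n, m)} {x : 'I_n -> R} :
  (forall i j k, 0 <= G t i j k) -> (forall i k, \sum_(j < n) G t i j k = 1) ->
  (forall i, inC (Ps i)) -> (forall i, 0 <= x i) ->
  forall j, 0 <= Mapply G t Ps x j.
Proof.
move=> G0 G1 PsC x0 j; apply: sumr_ge0 => i _.
by rewrite mulr_ge0 ?Mcol_ge0.
Qed.

Lemma dotv_Mapply_rew (R : realType) (n m : nat) (G : kernel R n m) r t
    (Ps : 'I_n -> 'M[R]_(n, m)) (x V : 'I_n -> R) :
  dotv x (fun i => rew G r t i (Ps i)) + dotv (Mapply G t Ps x) V =
  \sum_(i < n) x i * (rew G r t i (Ps i) + dotv (Mcol G t i (Ps i)) V).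
Proof.
rewrite /dotv /Mapply; under [RHS]eq_bigr do rewrite mulrDr.
rewrite big_split /=; congr (_ + _).
under eq_bigr do rewrite mulr_suml.
rewrite exchange_big /=; apply: eq_bigr => i _.
by rewrite mulr_sumr; apply: eq_bigr => j _; rewrite mulrAC mulrC.
Qed.

Lemma inC_const1 (R : realType) (n m : nat) : inC (const_mx 1 : 'M[R]_(n, m)).
Proof. by split=> j k; rewrite mxE // ler01 lexx. Qed.

Lemma Jd_succ (R : realType) (n m : nat) (G : kernel R n m) r rN N d
    (x : 'I_n -> R) :
  Jd G r rN N d.+1 x =
  sup_over (fun Ps : 'I_n -> 'M[R]_(n, m) => forall i, inC (Ps i))
    (fun Ps => dotv x (fun i => rew G r (N - d.+1)%N i (Ps i))
               + Jd G r rN N d (Mapply G (N - d.+1)%N Ps x)).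
Proof. by []. Qed.

Theorem proposition1 (R : realType) (n m N : nat)
  (G : kernel R n m) (r : nat -> 'I_n -> 'I_m -> R) (rN : 'I_n -> R) :
  (0 < m)%N -> (2 <= N)%N ->
  (forall t i j k, (1 <= t <= N.-1)%N -> 0 <= G t i j k) ->
  (forall t i k, (1 <= t <= N.-1)%N -> \sum_(j < n) G t i j k = 1) ->
  forall t : nat, (1 <= t <= N)%N ->
  forall x : 'I_n -> R, (forall i, 0 <= x i) ->
  J G r rN N t x = dotv x (Vstar G r rN N t).
Proof.
move=> _ N2 G0 G1.
suff Jd_lin d : (d <= N.-1)%N -> forall x : 'I_n -> R, (forall i, 0 <= x i) ->
    Jd G r rN N d x = dotv x (Vd G r rN N d).
  by move=> t /andP[t1 tN] x x0; apply: Jd_lin; rewrite // -subn1 leq_sub2l.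
elim: d => [//|d IH] dN x x0.
set s := (N - d.+1)%N.
have sN : (1 <= s <= N.-1)%N.
  rewrite subn_gt0 -subn1 leq_sub2l // andbT (leq_ltn_trans dN) //.
  by rewrite ltn_predL (leq_trans _ N2).
have [Gs0 Gs1] := (fun i j k => G0 s i j k sN, fun i k => G1 s i k sN).
have f_le i P : inC P -> rew G r s i P + dotv (Mcol G s i P) (Vd G r rN N d)
    <= \sum_(k < m) `|r s i k| + \sum_(j < n) m%:R * `|Vd G r rN N d j|.
  by move=> PC; rewrite lerD ?rew_le ?dotv_Mcol_le.
rewrite Jd_succ.
apply: eq_trans (sup_over_sum x0 (ex_intro _ _ (inC_const1 R n m)) f_le).
apply: eq_sup_over => Ps PsC.
rewrite IH; first exact: dotv_Mapply_rew.
  exact: ltnW.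
exact: Mapply_ge0 Gs0 Gs1 PsC x0.
Qed.
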